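(* Let $G$ act on a simplicial tree $T$ and let $h\in G$ be hyperbolic. For $\lambda>0$ consider the conditions: $FS(\lambda)$: every element of $G$ fixing a subsegment of $A(h)$ of length greater than $\lambda\,tl(h)$ fixes $A(h)$ pointwise; $AI(\lambda)$: for every hyperbolic $g\in G$ with $tl(g)\le tl(h)$, either $|A(g)\cap A(h)|\le\lambda\,tl(h)$ or $g\in E(h)$; $WS(\lambda)$: $h$ is weakly $\lambda$-stable. Then $FS(\lambda)$ implies both $AI(\lambda+2)$ and $WS(\lambda+2)$, and $WS(\lambda)$ implies $FS(\lambda)$.
   Context: $tl(g)=\inf_p d(p,gp)$; $A(h)$ is the translation axis of hyperbolic $h$; $E(h)$ is the set of elements of $G$ preserving $A(h)$ setwise. $h$ is weakly $\lambda$-stable if for all $g\in G$, $|A(h)\cap gA(h)|>\lambda tl(h)$ implies $g\in E(h)$. *)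

From Stdlib Require Import Reals List Arith Lia ClassicalEpsilon.
Import ListNotations.
Open Scope R_scope.

Section Graphs.
Variable V : Type.
Variable adj : V -> V -> Prop.

Fixpoint chain (x : V) (l : list V) : Prop :=
  match l with
  | nil => True
  | y :: l' => adj x y /\ chain y l'
  end.

Definition walk (x y : V) (n : nat) : Prop :=
  exists l : list V, chain x l /\ last l x = y /\ length l = n.

Definition has_cycle : Prop :=
  exists (x : V) (l : list V),
    (2 <= length l)%nat /\ NoDup (x :: l) /\ chain x l /\ adj (last l x) x.
End Graphs.

Record Tree := mkTree {
  vert : Type;
  adj : vert -> vert -> Prop;
  adj_sym : forall x y, adj x y -> adj y x;
  adj_irrefl : forall x, ~ adj x x;
  tree_connected : forall x y : vert, exists n, @walk vert adj x y n;
  tree_acyclic : ~ @has_cycle vert adj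
}.

Definition dist {T : Tree} (x y : vert T) : nat :=
  epsilon (inhabits 0%nat)
    (fun n => @walk (vert T) (adj T) x y n /\ forall m, @walk (vert T) (adj T) x y m -> (n <= m)%nat).

Record TreeAction (T : Tree) := mkTreeAction {
  grp : Type;
  g1 : grp;
  gmul : grp -> grp -> grp;
  ginv : grp -> grp;
  gmulA : forall a b c, gmul a (gmul b c) = gmul (gmul a b) c;
  gmul1l : forall a, gmul g1 a = a;
  gmulVl : forall a, gmul (ginv a) a = g1;
  act : grp -> vert T -> vert T;
  act1 : forall x, act g1 x = x;
  actM : forall a b x, act (gmul a b) x = act a (act b x);
  act_adj : forall a x y, adj T x y <-> adj T (act a x) (act a y)
}.

Arguments grp {T}.
Arguments act {T} _ _ _.

Section Action.
Variable T : Tree.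
Variable Ga : TreeAction T.

Definition tl (g : grp Ga) : nat :=
  epsilon (inhabits 0%nat)
    (fun t => (exists p, dist p (act Ga g p) = t) /\
              forall p, (t <= dist p (act Ga g p))%nat).

(* hyperbolic: fixes no point of the geometric realization, i.e. fixes no
   vertex and inverts no edge *)
Definition hyperbolic (g : grp Ga) : Prop :=
  (forall p, act Ga g p <> p) /\
  ~ (exists x y, adj T x y /\ act Ga g x = y /\ act Ga g y = x).

Definition axis (g : grp Ga) (p : vert T) : Prop := dist p (act Ga g p) = tl g.

Definition inE (h g : grp Ga) : Prop :=
  forall p, axis h p <-> axis h (act Ga g p).

Definition translate_axis (g h : grp Ga) (q : vert T) : Prop :=
  exists p, axis h p /\ q = act Ga g p.

Definition on_segment (x y z : vert T) : Prop :=
  (dist x z + dist z y = dist x y)%nat.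

(* length of A ∩ B (a convex set) exceeds L, i.e. its diameter exceeds L *)
Definition inter_length_gt (A B : vert T -> Prop) (L : R) : Prop :=
  exists x y, A x /\ B x /\ A y /\ B y /\ INR (dist x y) > L.

Definition inter_length_le (A B : vert T -> Prop) (L : R) : Prop :=
  forall x y, A x -> B x -> A y -> B y -> INR (dist x y) <= L.

Definition FS (h : grp Ga) (lam : R) : Prop :=
  forall g : grp Ga,
    (exists x y, axis h x /\ axis h y /\
       INR (dist x y) > lam * INR (tl h) /\
       (forall z, on_segment x y z -> act Ga g z = z)) ->
    forall p, axis h p -> act Ga g p = p.

Definition AI (h : grp Ga) (lam : R) : Prop :=
  forall g : grp Ga, hyperbolic g -> (tl g <= tl h)%nat ->
    inter_length_le (axis g) (axis h) (lam * INR (tl h)) \/ inE h g.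

Definition WS (h : grp Ga) (lam : R) : Prop :=
  forall g : grp Ga,
    inter_length_gt (axis h) (translate_axis g h) (lam * INR (tl h)) -> inE h g.
End Action.

Arguments tl {T} Ga g.
Arguments hyperbolic {T} Ga g.
Arguments FS {T} Ga h lam.
Arguments AI {T} Ga h lam.
Arguments WS {T} Ga h lam.

(* Put the axis A(h) of the hyperbolic element h in a line parametrisation l with
   h (l n) = l (n + tl h).  If the axis of g (with tl g <= tl h), or the translate
   g A(h), shares with A(h) a segment longer than (lam + 2) tl h, orient both
   translations the same way along it: the commutator of g and h (resp. the quotient
   of g h g^-1 and h) then fixes a subsegment of A(h) longer than lam tl h, so by FS it
   fixes A(h) pointwise, and g preserves A(h).  Conversely, if g fixes a segment of
   A(h) longer than lam tl h, then g A(h) contains it, so by WS g lies in E(h); an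
   isometry of the line A(h) with two fixed points fixes it pointwise. *)

From Stdlib Require Import Reals List Lia Lra ZArith Classical ClassicalEpsilon.

Local Open Scope nat_scope.

Lemma ex_minimal (P : nat -> Prop) :
  (exists n, P n) -> exists n, P n /\ forall m, P m -> n <= m.
Proof.
  intros [n0 H0]. induction n0 as [n0 IH] using lt_wf_ind.
  destruct (classic (exists m, m < n0 /\ P m)) as [[m [Hm Pm]]|Hn].
  - exact (IH m Hm Pm).
  - exists n0. split; auto. intros m Pm.
    destruct (le_lt_dec n0 m); auto. exfalso; apply Hn; eauto.
Qed.

Section TreeGeometry.
Variable T : Tree.
Notation V := (vert T).
Notation A := (adj T).

Definition path (f : nat -> V) (n : nat) : Prop := forall i, i < n -> A (f i) (f (S i)).

Lemma last_cons (a : V) l d : last (a :: l) d = last l a.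
Proof.
  revert a d. induction l as [|x l IH]; intros a d; [reflexivity|].
  change (last (x :: l) d = last (x :: l) a). rewrite !IH. reflexivity.
Qed.

Lemma chain_map (f : nat -> V) k : forall s,
  (forall i, s <= i -> i < s + k -> A (f i) (f (S i))) ->
  chain V A (f s) (map f (seq (S s) k)).
Proof.
  induction k; intros s H; simpl; auto.
  split; [apply H; lia|]. apply IHk. intros; apply H; lia.
Qed.

Lemma last_map_seq (f : nat -> V) k : forall s, last (map f (seq (S s) k)) (f s) = f (s + k).
Proof.
  induction k; intros s; [simpl; f_equal; lia|].
  cbn [seq map]. rewrite last_cons, IHk. f_equal; lia.
Qed.

Lemma walk_of_path f n : path f n -> walk V A (f 0) (f n) n.
Proof.
  intros H. exists (map f (seq 1 n)). split; [|split].
  - apply chain_map. intros; apply H; lia.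
  - apply last_map_seq.
  - rewrite length_map, length_seq; auto.
Qed.

Lemma path_of_walk x y n : walk V A x y n -> exists f, f 0 = x /\ f n = y /\ path f n.
Proof.
  intros [l [Hc [Hl Hn]]]. revert x n Hc Hl Hn.
  induction l as [|a l IH]; intros x n Hc Hl Hn.
  - simpl in *. subst. exists (fun _ => y). repeat split; auto. intros i Hi; lia.
  - simpl in Hn. destruct Hc as [Ha Hc]. rewrite last_cons in Hl.
    destruct (IH a (length l) Hc Hl eq_refl) as [f [F0 [Fn Fp]]].
    exists (fun i => match i with 0 => x | S j => f j end). subst n. repeat split; auto.
    intros [|i] Hi; [simpl; rewrite F0; auto|apply Fp; lia].
Qed.

Definition glue (f : nat -> V) (a : nat) (g : nat -> V) : nat -> V :=
  fun i => if i <=? a then f i else g (i - a).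

Lemma glue_l f a g i : i <= a -> glue f a g i = f i.
Proof. intros; unfold glue. destruct (Nat.leb_spec i a); auto; lia. Qed.

Lemma glue_r f a g i : f a = g 0 -> a <= i -> glue f a g i = g (i - a).
Proof.
  intros E H; unfold glue. destruct (Nat.leb_spec i a); auto.
  assert (i = a) by lia. subst. rewrite Nat.sub_diag; auto.
Qed.

Lemma path_glue f a g b : path f a -> path g b -> f a = g 0 -> path (glue f a g) (a + b).
Proof.
  intros Hf Hg E i Hi. destruct (le_lt_dec a i).
  - rewrite !glue_r by (auto; lia). replace (S i - a) with (S (i - a)) by lia. apply Hg; lia.
  - rewrite !glue_l by lia. apply Hf; lia.
Qed.

Lemma path_shift f n k : path f n -> k <= n -> path (fun i => f (k + i)) (n - k).
Proof. intros H Hk i Hi. replace (k + S i) with (S (k + i)) by lia. apply H; lia. Qed.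

Lemma dist_spec (x y : V) :
  walk V A x y (dist x y) /\ forall m, walk V A x y m -> dist x y <= m.
Proof. unfold dist. apply epsilon_spec, ex_minimal, tree_connected. Qed.

Lemma shortest_path (x y : V) : exists f, f 0 = x /\ f (dist x y) = y /\ path f (dist x y).
Proof. apply path_of_walk, dist_spec. Qed.

Lemma dist_le_path f n : path f n -> dist (f 0) (f n) <= n.
Proof. intros H. apply dist_spec, walk_of_path; auto. Qed.

Lemma dist_xx (x : V) : dist x x = 0.
Proof.
  assert (H := dist_le_path (fun _ => x) 0). simpl in H.
  enough (dist x x <= 0) by lia. apply H. intros i Hi; lia.
Qed.

Lemma dist_eq0 (x y : V) : dist x y = 0 -> x = y.
Proof. intros H. destruct (shortest_path x y) as [f [F0 [Fn _]]]. rewrite H in Fn. congruence. Qed.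

Lemma dist_sym_le (x y : V) : dist y x <= dist x y.
Proof.
  destruct (shortest_path x y) as [f [F0 [Fn Fp]]]. set (n := dist x y) in *.
  assert (H := dist_le_path (fun i => f (n - i)) n). simpl in H.
  rewrite Nat.sub_0_r, Nat.sub_diag, Fn, F0 in H. apply H.
  intros i Hi. apply adj_sym. replace (n - i) with (S (n - S i)) by lia. apply Fp; lia.
Qed.

Lemma dist_sym (x y : V) : dist x y = dist y x.
Proof. apply Nat.le_antisymm; apply dist_sym_le. Qed.

Lemma dist_triangle (x y z : V) : dist x z <= dist x y + dist y z.
Proof.
  destruct (shortest_path x y) as [f [F0 [Fn Fp]]].
  destruct (shortest_path y z) as [g [G0 [Gn Gp]]].
  assert (H := dist_le_path _ _ (path_glue f _ g _ Fp Gp ltac:(congruence))).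
  rewrite glue_l in H by lia. rewrite glue_r in H by (congruence || lia).
  replace (dist x y + dist y z - dist x y) with (dist y z) in H by lia. congruence.
Qed.

Lemma dist_adj (x y : V) : A x y -> dist x y = 1.
Proof.
  intros H. assert (H1 := dist_le_path (fun i => match i with 0 => x | _ => y end) 1).
  simpl in H1. assert (dist x y <= 1) by (apply H1; intros [|i] Hi; [auto|lia]).
  assert (dist x y <> 0) by (intros E; apply dist_eq0 in E; subst; eapply adj_irrefl; eauto).
  lia.
Qed.

Lemma adj_dist1 (x y : V) : dist x y = 1 -> A x y.
Proof. intros H. destruct (shortest_path x y) as [f [F0 [Fn Fp]]]. rewrite H in *. subst. apply Fp; lia. Qed.

Lemma path_dist_le f n i j : path f n -> i <= j <= n -> dist (f i) (f j) <= j - i.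
Proof.
  intros H Hij.
  assert (H1 := dist_le_path _ _ (path_shift f j i (fun k Hk => H k ltac:(lia)) ltac:(lia))).
  simpl in H1. rewrite Nat.add_0_r in H1. replace (i + (j - i)) with j in H1 by lia. auto.
Qed.

Definition geodesic (f : nat -> V) (n : nat) : Prop := path f n /\ dist (f 0) (f n) = n.

Lemma geodesic_dist f n : geodesic f n -> forall i j, i <= j <= n -> dist (f i) (f j) = j - i.
Proof.
  intros [Hp Hd] i j Hij.
  assert (H1 := path_dist_le f n i j Hp Hij).
  assert (H2 := path_dist_le f n 0 i Hp ltac:(lia)).
  assert (H3 := path_dist_le f n j n Hp ltac:(lia)).
  assert (H4 := dist_triangle (f 0) (f i) (f n)).
  assert (H5 := dist_triangle (f i) (f j) (f n)). lia.
Qed.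

Lemma exists_geodesic (x y : V) : exists f, f 0 = x /\ f (dist x y) = y /\ geodesic f (dist x y).
Proof.
  destruct (shortest_path x y) as [f [F0 [Fn Fp]]]. exists f. repeat split; auto. congruence.
Qed.

Lemma closed_path_not_injective (c : nat -> V) N : 3 <= N -> path c N -> c N = c 0 ->
  ~ (forall i j, i < N -> j < N -> c i = c j -> i = j).
Proof.
  intros HN Hp Hc Hi. apply (tree_acyclic T).
  exists (c 0), (map c (seq 1 (N - 1))). split; [|split; [|split]].
  - rewrite length_map, length_seq; lia.
  - change (c 0 :: map c (seq 1 (N - 1))) with (map c (0 :: seq 1 (N - 1))).
    replace (0 :: seq 1 (N - 1)) with (seq 0 N)
      by (destruct N; [lia|simpl; f_equal; f_equal; lia]).
    apply NoDup_map_NoDup_ForallPairs; [|apply seq_NoDup].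
    intros i j Hi' Hj'. apply in_seq in Hi', Hj'. apply Hi; lia.
  - apply chain_map. intros; apply Hp; lia.
  - rewrite last_map_seq, <- Hc. replace N with (S (0 + (N - 1))) at 2 by lia. apply Hp; lia.
Qed.

(* Two injective paths from a common origin, disjoint afterwards and with adjacent
   endpoints, would close up into a cycle. *)
Lemma no_disjoint_arms (P Q : nat -> V) a b : P 0 = Q 0 -> path P a -> path Q b ->
  A (P a) (Q b) -> 2 <= a + b ->
  (forall i j, i <= a -> j <= a -> P i = P j -> i = j) ->
  (forall i j, i <= b -> j <= b -> Q i = Q j -> i = j) ->
  ~ (forall i j, 0 < i <= a -> 0 < j <= b -> P i <> Q j).
Proof.
  intros E Hp Hq Hab H2 IP IQ X.
  set (c := fun i => if i <=? a then P i else Q (a + b + 1 - i)).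
  assert (CL : forall i, i <= a -> c i = P i).
  { intros i Hi; unfold c. destruct (Nat.leb_spec i a); auto; lia. }
  assert (CR : forall i, a < i -> c i = Q (a + b + 1 - i)).
  { intros i Hi; unfold c. destruct (Nat.leb_spec i a); auto; lia. }
  apply (closed_path_not_injective c (a + b + 1)); try lia.
  - intros i Hi. destruct (lt_eq_lt_dec i a) as [[H|H]|H].
    + rewrite !CL by lia. apply Hp; lia.
    + subst. rewrite CL, CR by lia. replace (a + b + 1 - S a) with b by lia. auto.
    + rewrite !CR by lia. apply adj_sym.
      replace (a + b + 1 - i) with (S (a + b + 1 - S i)) by lia. apply Hq; lia.
  - rewrite CR, CL by lia. replace (a + b + 1 - (a + b + 1)) with 0 by lia. auto.
  - intros i j Hi Hj Hij. destruct (le_lt_dec i a), (le_lt_dec j a).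
    + rewrite !CL in Hij by lia. apply IP; auto.
    + rewrite CL, CR in Hij by lia. exfalso. destruct i.
      * rewrite E in Hij. apply IQ in Hij; lia.
      * apply (X (S i) (a + b + 1 - j)); auto; lia.
    + rewrite CR, CL in Hij by lia. exfalso. destruct j.
      * rewrite E in Hij. apply IQ in Hij; lia.
      * apply (X (S j) (a + b + 1 - i)); auto; lia.
    + rewrite !CR in Hij by lia. apply IQ in Hij; lia.
Qed.

Lemma last_agreement (P Q : nat -> V) m : P 0 = Q 0 ->
  exists k, k <= m /\ P k = Q k /\ forall i, k < i <= m -> P i <> Q i.
Proof.
  intros E. induction m.
  - exists 0. repeat split; auto. intros; lia.
  - destruct (classic (P (S m) = Q (S m))) as [H|H].
    + exists (S m). repeat split; auto. intros; lia.
    + destruct IHm as [k [Hk [Hk1 Hk2]]]. exists k. repeat split; auto.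
      intros i Hi. destruct (Nat.eq_dec i (S m)); [subst; auto|apply Hk2; lia].
Qed.

(* Paths leaving [z] radially ([dist z (P i) = i]) are injective, so after they part
   they stay apart; adjacent endpoints would then produce a cycle. *)
Lemma radial_paths_agree z (P Q : nat -> V) a b m :
  m <= a -> m <= b -> (a <= m \/ b <= m) -> P 0 = Q 0 ->
  (forall i, i <= a -> dist z (P i) = i) -> (forall j, j <= b -> dist z (Q j) = j) ->
  path P a -> path Q b -> A (P a) (Q b) -> P m = Q m.
Proof.
  intros Ha Hb Hm E DP DQ Hp Hq Hab. apply NNPP. intros Hne.
  destruct (last_agreement P Q m E) as [k [Hk [Hk1 Hk2]]].
  assert (Hkm : k <> m) by (intro; subst; auto).
  apply (no_disjoint_arms (fun i => P (k + i)) (fun i => Q (k + i)) (a - k) (b - k)).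
  - rewrite !Nat.add_0_r; auto.
  - apply path_shift; auto; lia.
  - apply path_shift; auto; lia.
  - replace (k + (a - k)) with a by lia. replace (k + (b - k)) with b by lia. auto.
  - lia.
  - intros i j Hi Hj H. apply (f_equal (dist z)) in H. rewrite !DP in H by lia. lia.
  - intros i j Hi Hj H. apply (f_equal (dist z)) in H. rewrite !DQ in H by lia. lia.
  - intros i j Hi Hj H. assert (H' := f_equal (dist z) H). rewrite DP, DQ in H' by lia.
    assert (i = j) by lia. subst. apply (Hk2 (k + j)); auto; lia.
Qed.

Lemma geodesic_radial z f n : geodesic f n -> f 0 = z -> forall i, i <= n -> dist z (f i) = i.
Proof. intros G F0 i Hi. rewrite <- F0, (geodesic_dist f n G 0 i) by lia. lia. Qed.

Lemma adj_dist_neq z (u v : V) : A u v -> dist z u <> dist z v.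
Proof.
  intros Huv E.
  destruct (exists_geodesic z u) as [P [P0 [Pn Pg]]].
  destruct (exists_geodesic z v) as [Q [Q0 [Qn Qg]]].
  set (n := dist z u) in *. rewrite <- E in Qn, Qg.
  assert (Hm : P n = Q n).
  { apply (radial_paths_agree z P Q n n n); try lia.
    - congruence.
    - exact (geodesic_radial z P n Pg P0).
    - exact (geodesic_radial z Q n Qg Q0).
    - apply Pg.
    - apply Qg.
    - congruence. }
  rewrite Pn, Qn in Hm. rewrite Hm in Huv. exact (adj_irrefl T v Huv).
Qed.

Lemma adj_dist_succ z (u v : V) : A u v -> dist z v = S (dist z u) \/ dist z u = S (dist z v).
Proof.
  intros H. assert (T1 := dist_triangle z u v). assert (T2 := dist_triangle z v u).
  rewrite (dist_adj u v H) in T1. rewrite (dist_adj v u (adj_sym _ _ _ H)) in T2.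
  assert (dist z u <> dist z v) by (apply adj_dist_neq; auto). lia.
Qed.

Lemma unique_step_toward z (y w1 w2 : V) : A y w1 -> A y w2 ->
  dist z w1 < dist z y -> dist z w2 < dist z y -> w1 = w2.
Proof.
  intros H1 H2 D1 D2.
  destruct (adj_dist_succ z y w1 H1) as [|E1]; [lia|].
  destruct (adj_dist_succ z y w2 H2) as [|E2]; [lia|].
  destruct (exists_geodesic z w1) as [P [P0 [Pn Pg]]].
  destruct (exists_geodesic z w2) as [Q [Q0 [Qn Qg]]].
  set (n := dist z w1) in *. assert (E : dist z w2 = n) by lia. rewrite E in Qn, Qg.
  set (P' := glue P n (fun _ => y)).
  assert (PL : forall i, i <= n -> P' i = P i) by (intros; apply glue_l; auto).
  assert (PR : P' (S n) = y) by (unfold P', glue; destruct (Nat.leb_spec (S n) n); auto; lia).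
  rewrite <- Pn, <- Qn, <- PL by lia.
  apply (radial_paths_agree z P' Q (S n) n n); try lia.
  - rewrite PL by lia. congruence.
  - intros i Hi. destruct (Nat.eq_dec i (S n)) as [->|]; [rewrite PR; lia|].
    rewrite PL by lia. apply (geodesic_radial z P n Pg P0); lia.
  - exact (geodesic_radial z Q n Qg Q0).
  - intros i Hi. destruct (Nat.eq_dec i n) as [->|].
    + rewrite PL, PR, Pn by lia. apply adj_sym; auto.
    + rewrite !PL by lia. apply Pg; lia.
  - apply Qg.
  - rewrite PR, Qn. auto.
Qed.

Definition no_backtrack (f : nat -> V) (n : nat) : Prop := forall i, i + 2 <= n -> f i <> f (i + 2).

Lemma no_backtrack_geodesic f n : path f n -> no_backtrack f n -> geodesic f n.
Proof.
  intros Hp Hn. split; auto.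
  enough (H : forall k, k <= n -> dist (f 0) (f k) = k) by auto.
  assert (Hs : forall k, S k <= n -> dist (f 0) (f k) = k /\ dist (f 0) (f (S k)) = S k).
  { induction k; intros Hk.
    - split; [apply dist_xx|apply dist_adj, Hp; lia].
    - destruct IHk as [I1 I2]; [lia|]. split; auto.
      destruct (adj_dist_succ (f 0) (f (S k)) (f (S (S k)))) as [H|H]; [apply Hp; lia|lia|].
      exfalso. apply (Hn k); [lia|]. replace (k + 2) with (S (S k)) by lia.
      apply (unique_step_toward (f 0) (f (S k))); try lia; [apply adj_sym|]; apply Hp; lia. }
  intros [|k] Hk; [apply dist_xx|apply Hs; lia].
Qed.

Lemma geodesic_no_backtrack f n : geodesic f n -> no_backtrack f n.
Proof.
  intros G i Hi E. assert (H := geodesic_dist f n G i (i + 2) ltac:(lia)).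
  rewrite E, dist_xx in H. lia.
Qed.

Lemma no_backtrack_glue f a g b : path f a -> path g b -> f a = g 0 ->
  no_backtrack f a -> no_backtrack g b ->
  (1 <= a -> 1 <= b -> f (a - 1) <> g 1) -> no_backtrack (glue f a g) (a + b).
Proof.
  intros Pf Pg E Nf Ng J i Hi. destruct (le_lt_dec (i + 2) a).
  - rewrite !glue_l by lia. apply Nf; lia.
  - destruct (Nat.eq_dec (i + 1) a).
    + rewrite glue_l, glue_r by (auto; lia). replace i with (a - 1) by lia.
      replace (a - 1 + 2 - a) with 1 by lia. apply J; lia.
    + rewrite !glue_r by (auto; lia). replace (i + 2 - a) with (i - a + 2) by lia. apply Ng; lia.
Qed.

Lemma geodesic_glue f a g b : geodesic f a -> geodesic g b -> f a = g 0 ->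
  (1 <= a -> 1 <= b -> f (a - 1) <> g 1) -> geodesic (glue f a g) (a + b).
Proof.
  intros Gf Gg E J. apply no_backtrack_geodesic.
  - apply path_glue; auto; [apply Gf|apply Gg].
  - apply no_backtrack_glue; auto; [apply Gf|apply Gg| |]; apply geodesic_no_backtrack; auto.
Qed.

Lemma geodesic_unique f g n : geodesic f n -> geodesic g n -> f 0 = g 0 -> f n = g n ->
  forall i, i <= n -> f i = g i.
Proof.
  intros Gf Gg E0 En. induction i; intros Hi; auto.
  assert (IH := IHi ltac:(lia)).
  assert (Df : forall j, j <= n -> dist (f n) (f j) = n - j)
    by (intros j Hj; rewrite dist_sym; apply (geodesic_dist f n Gf); lia).
  assert (Dg : forall j, j <= n -> dist (g n) (g j) = n - j)
    by (intros j Hj; rewrite dist_sym; apply (geodesic_dist g n Gg); lia).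
  apply (unique_step_toward (f n) (f i)).
  - apply Gf; lia.
  - rewrite IH. apply Gg; lia.
  - rewrite !Df by lia. lia.
  - rewrite En, IH, !Dg by lia. lia.
Qed.

End TreeGeometry.

Section Isometries.
Variable T : Tree.
Variable Ga : TreeAction T.
Notation V := (vert T).
Notation A := (adj T).
Notation G := (grp Ga).
Notation gi := (ginv T Ga).
Notation ac := (act Ga).

Lemma act_invK (g : G) x : ac (gi g) (ac g x) = x.
Proof. rewrite <- actM, gmulVl, act1. auto. Qed.

Lemma act_inj (g : G) x y : ac g x = ac g y -> x = y.
Proof. intros H. rewrite <- (act_invK g x), <- (act_invK g y), H. auto. Qed.

Lemma act_Kinv (g : G) x : ac g (ac (gi g) x) = x.
Proof. apply (act_inj (gi g)). rewrite act_invK. auto. Qed.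

Lemma dist_act_le (g : G) x y : dist (ac g x) (ac g y) <= dist x y.
Proof.
  destruct (shortest_path T x y) as [f [F0 [Fn Fp]]].
  assert (Hp : path T (fun i => ac g (f i)) (dist x y)) by (intros i Hi; apply act_adj, Fp; auto).
  assert (H := dist_le_path T _ _ Hp). simpl in H. rewrite F0, Fn in H. auto.
Qed.

Lemma dist_act (g : G) x y : dist (ac g x) (ac g y) = dist x y.
Proof.
  apply Nat.le_antisymm; [apply dist_act_le|].
  assert (H := dist_act_le (gi g) (ac g x) (ac g y)). rewrite !act_invK in H. exact H.
Qed.

Lemma geodesic_act_rev (g : G) f n : geodesic T f n -> geodesic T (fun j => ac g (f (n - j))) n.
Proof.
  intros Gf. split.
  - intros j Hj. apply act_adj, adj_sym. replace (n - j) with (S (n - S j)) by lia. apply Gf; lia.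
  - rewrite dist_act, Nat.sub_0_r, Nat.sub_diag, dist_sym. apply Gf.
Qed.

Lemma displacement_inv (g : G) q : dist q (ac (gi g) q) = dist q (ac g q).
Proof. rewrite <- (dist_act g), act_Kinv. apply dist_sym. Qed.

Lemma tl_spec (p0 : V) (g : G) :
  (exists q, dist q (ac g q) = tl Ga g) /\ forall q, tl Ga g <= dist q (ac g q).
Proof.
  unfold tl. apply epsilon_spec.
  destruct (ex_minimal (fun t => exists q, dist q (ac g q) = t)) as [n [[q Hq] Hmin]];
    [exists (dist p0 (ac g p0)), p0; auto|].
  exists n. split; [eauto|intros q'; apply Hmin; eauto].
Qed.

Lemma tl_pos (p0 : V) (f : G) : hyperbolic Ga f -> 1 <= tl Ga f.
Proof.
  intros [Hfix _]. destruct (tl_spec p0 f) as [[q Hq] _].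
  destruct (tl Ga f); [|lia]. exfalso. apply (Hfix q). symmetry. apply dist_eq0; auto.
Qed.

Definition actz (g : G) (k : Z) (x : V) : V :=
  if (0 <=? k)%Z then Nat.iter (Z.to_nat k) (ac g) x
  else Nat.iter (Z.to_nat (- k)) (ac (gi g)) x.

Lemma actz_succ g k x : actz g (k + 1) x = ac g (actz g k x).
Proof.
  unfold actz. destruct (Z.leb_spec 0 k), (Z.leb_spec 0 (k + 1)); try lia.
  - replace (Z.to_nat (k + 1)) with (S (Z.to_nat k)) by lia. reflexivity.
  - replace (Z.to_nat (k + 1)) with 0 by lia. replace (Z.to_nat (- k)) with 1 by lia.
    simpl. rewrite act_Kinv. auto.
  - replace (Z.to_nat (- k)) with (S (Z.to_nat (- (k + 1)))) by lia. simpl.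
    rewrite act_Kinv. auto.
Qed.

Lemma actz_pred g k x : actz g (k - 1) x = ac (gi g) (actz g k x).
Proof.
  replace (actz g k x) with (actz g (k - 1 + 1) x) by (f_equal; lia).
  rewrite actz_succ, act_invK. auto.
Qed.

Lemma actz_add g k : forall l x, actz g (k + l) x = actz g k (actz g l x).
Proof.
  induction k using Z.peano_ind; intros l x.
  - reflexivity.
  - replace (Z.succ k + l)%Z with (k + l + 1)%Z by lia. rewrite <- Z.add_1_r.
    rewrite !actz_succ, IHk. auto.
  - replace (Z.pred k + l)%Z with (k + l - 1)%Z by lia. rewrite <- Z.sub_1_r.
    rewrite !actz_pred, IHk. auto.
Qed.

Lemma actz_dist g k x y : dist (actz g k x) (actz g k y) = dist x y.
Proof.
  assert (It : forall e n, dist (Nat.iter n (ac e) x) (Nat.iter n (ac e) y) = dist x y)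
    by (induction n; simpl; auto; rewrite dist_act; auto).
  unfold actz. destruct (0 <=? k)%Z; apply It.
Qed.

Lemma actz_inj g k x y : actz g k x = actz g k y -> x = y.
Proof. intros H. apply dist_eq0. rewrite <- (actz_dist g k), H. apply dist_xx. Qed.

Lemma actz_adj g k x y : A x y -> A (actz g k x) (actz g k y).
Proof. intros H. apply adj_dist1. rewrite actz_dist. apply dist_adj; auto. Qed.

Definition isometric_line (l : Z -> V) : Prop :=
  forall m n, (m <= n)%Z -> dist (l m) (l n) = Z.to_nat (n - m).

Lemma isometric_line_dist l : isometric_line l ->
  forall m n, Z.of_nat (dist (l m) (l n)) = Z.abs (n - m).
Proof.
  intros I m n. destruct (Z.le_gt_cases m n).
  - rewrite I by lia. lia.
  - rewrite dist_sym, I by lia. lia.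
Qed.

Lemma isometric_line_geodesic (l : Z -> V) s L : isometric_line l ->
  geodesic T (fun i => l (s + Z.of_nat i)%Z) L.
Proof.
  intros I. split.
  - intros i Hi. apply adj_dist1. rewrite I by lia. lia.
  - rewrite I by lia. lia.
Qed.

Lemma line_of_no_backtrack (l : Z -> V) : (forall n, A (l n) (l (n + 1)%Z)) ->
  (forall n, l (n - 1)%Z <> l (n + 1)%Z) -> isometric_line l.
Proof.
  intros Ha Hn m n Hmn.
  set (ray := fun i : nat => l (m + Z.of_nat i)%Z).
  assert (Gr : geodesic T ray (Z.to_nat (n - m))).
  { apply no_backtrack_geodesic.
    - intros i Hi. unfold ray. replace (m + Z.of_nat (S i))%Z with (m + Z.of_nat i + 1)%Z by lia.
      apply Ha.
    - intros i Hi. unfold ray. replace (m + Z.of_nat i)%Z with (m + Z.of_nat i + 1 - 1)%Z by lia.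
      replace (m + Z.of_nat (i + 2))%Z with (m + Z.of_nat i + 1 + 1)%Z by lia. apply Hn. }
  destruct Gr as [_ Hd]. unfold ray in Hd. rewrite Z.add_0_r in Hd.
  replace (m + Z.of_nat (Z.to_nat (n - m)))%Z with n in Hd by lia. auto.
Qed.

Lemma isometric_lines_agree (l1 l2 : Z -> V) (L : nat) : isometric_line l1 -> isometric_line l2 ->
  l1 0%Z = l2 0%Z -> l1 (Z.of_nat L) = l2 (Z.of_nat L) ->
  forall t, (0 <= t <= Z.of_nat L)%Z -> l1 t = l2 t.
Proof.
  intros I1 I2 E0 EL t Ht.
  assert (H := geodesic_unique T _ _ L (isometric_line_geodesic l1 0 L I1)
                 (isometric_line_geodesic l2 0 L I2) E0 EL (Z.to_nat t) ltac:(lia)).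
  simpl in H. rewrite Z2Nat.id in H by lia. auto.
Qed.

Lemma segment_on_line (l : Z -> V) (L : nat) z : isometric_line l ->
  on_segment T (l 0%Z) (l (Z.of_nat L)) z ->
  z = l (Z.of_nat (dist (l 0%Z) z)) /\ dist (l 0%Z) z <= L.
Proof.
  intros I Hs. unfold on_segment in Hs. rewrite I in Hs by lia.
  replace (Z.to_nat (Z.of_nat L - 0)) with L in Hs by lia.
  destruct (exists_geodesic T (l 0%Z) z) as [G1 [G10 [G1a G1g]]].
  destruct (exists_geodesic T z (l (Z.of_nat L))) as [G2 [G20 [G2b G2g]]].
  set (a := dist (l 0%Z) z) in *. set (b := dist z (l (Z.of_nat L))) in *.
  set (W := glue T G1 a G2).
  assert (W0 : W 0 = l 0%Z) by (unfold W; rewrite glue_l by lia; auto).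
  assert (WL : W L = l (Z.of_nat L)).
  { unfold W. rewrite glue_r by (congruence || lia). replace (L - a) with b by lia. auto. }
  assert (GW : geodesic T W L).
  { split; [|rewrite W0, WL, I by lia; lia].
    replace L with (a + b) by lia. apply path_glue; [apply G1g|apply G2g|congruence]. }
  assert (H := geodesic_unique T W _ L GW (isometric_line_geodesic l 0 L I) W0 WL a ltac:(lia)).
  unfold W in H. rewrite glue_l, G1a in H by lia. split; auto. lia.
Qed.

Definition translation_line (f : G) (l : Z -> V) : Prop :=
  isometric_line l /\ forall n, ac f (l n) = l (n + Z.of_nat (tl Ga f))%Z.

Lemma translation_line_axis f l : translation_line f l -> forall n, axis T Ga f (l n).
Proof. intros [I Sh] n. unfold axis. rewrite Sh, I by lia. lia. Qed.

Section PeriodicLine.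
Variable f : G.
Variable tau : nat.
Variable seg : nat -> V.
Hypothesis tau_pos : 1 <= tau.
Hypothesis seg_path : path T seg tau.
Hypothesis seg_end : seg tau = ac f (seg 0).

Let tz := Z.of_nat tau.

Definition periodic_line (n : Z) : V := actz f (n / tz) (seg (Z.to_nat (n mod tz))).

Lemma periodic_line_eq q r : (0 <= r <= tz)%Z ->
  periodic_line (tz * q + r) = actz f q (seg (Z.to_nat r)).
Proof.
  assert (Hlt : forall q r, (0 <= r < tz)%Z ->
            periodic_line (tz * q + r) = actz f q (seg (Z.to_nat r))).
  { intros q' r' Hr'. unfold periodic_line.
    rewrite <- (Z.div_unique_pos _ _ q' r' Hr' eq_refl),
            <- (Z.mod_unique_pos _ _ q' r' Hr' eq_refl). auto. }
  intros Hr. destruct (Z.eq_dec r tz) as [->|Hne]; [|apply Hlt; lia].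
  replace (tz * q + tz)%Z with (tz * (q + 1) + 0)%Z by lia.
  rewrite Hlt, actz_add by lia. change (Z.to_nat 0) with 0.
  replace (Z.to_nat tz) with tau by lia. rewrite seg_end. reflexivity.
Qed.

Lemma periodic_line_decomp n : exists q r, (0 <= r < tz)%Z /\ n = (tz * q + r)%Z.
Proof.
  exists (n / tz)%Z, (n mod tz)%Z. split; [apply Z.mod_pos_bound; lia|apply Z.div_mod; lia].
Qed.

Lemma periodic_line_adj n : A (periodic_line n) (periodic_line (n + 1)%Z).
Proof.
  destruct (periodic_line_decomp n) as [q [r [Hr ->]]].
  replace (tz * q + r + 1)%Z with (tz * q + (r + 1))%Z by lia.
  rewrite !periodic_line_eq by lia. apply actz_adj.
  replace (Z.to_nat (r + 1)) with (S (Z.to_nat r)) by lia. apply seg_path. lia.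
Qed.

Lemma periodic_line_shift n : ac f (periodic_line n) = periodic_line (n + tz)%Z.
Proof.
  destruct (periodic_line_decomp n) as [q [r [Hr ->]]].
  replace (tz * q + r + tz)%Z with (tz * (q + 1) + r)%Z by lia.
  rewrite !periodic_line_eq by lia. rewrite actz_succ. auto.
Qed.

(* Backtracking at a multiple of [tau] would mean that [f] moves [seg 1] by [tau - 2],
   or, when [tau = 1], that [f] inverts the edge [seg 0, seg 1]. *)
Lemma periodic_line_no_backtrack : geodesic T seg tau ->
  ~ (exists x y, A x y /\ ac f x = y /\ ac f y = x) ->
  (forall q, tau <= dist q (ac f q)) ->
  forall n, periodic_line (n - 1)%Z <> periodic_line (n + 1)%Z.
Proof.
  intros Sg Hinv Hmin n. destruct (periodic_line_decomp n) as [q [r [Hr ->]]].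
  destruct (Z.eq_dec r 0) as [->|Hr0].
  - replace (tz * q + 0 - 1)%Z with (tz * (q + -1) + (tz - 1))%Z by lia.
    replace (tz * q + 0 + 1)%Z with (tz * q + 1)%Z by lia.
    rewrite !periodic_line_eq by lia. rewrite actz_add. intros E. apply actz_inj in E.
    replace (Z.to_nat (tz - 1)) with (tau - 1) in E by lia.
    change (Z.to_nat 1) with 1 in E.
    assert (E' : seg (tau - 1) = ac f (seg 1)) by (rewrite <- E; symmetry; exact (act_Kinv f _)).
    destruct (Nat.eq_dec tau 1) as [H1|H1].
    + apply Hinv. exists (seg 0), (seg 1). split; [apply seg_path; lia|].
      rewrite <- seg_end, <- E', H1. auto.
    + assert (Hd := Hmin (seg 1)). rewrite <- E' in Hd.
      rewrite (geodesic_dist T seg tau Sg 1 (tau - 1)) in Hd by lia. lia.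
  - replace (tz * q + r - 1)%Z with (tz * q + (r - 1))%Z by lia.
    replace (tz * q + r + 1)%Z with (tz * q + (r + 1))%Z by lia.
    rewrite !periodic_line_eq by lia. intros E. apply actz_inj in E.
    apply (geodesic_no_backtrack T seg tau Sg (Z.to_nat (r - 1))); [lia|].
    replace (Z.to_nat (r - 1) + 2) with (Z.to_nat (r + 1)) by lia. auto.
Qed.

End PeriodicLine.

Lemma exists_translation_line (p0 : V) (f : G) : hyperbolic Ga f ->
  exists l, translation_line f l.
Proof.
  intros hf. assert (Htau := tl_pos p0 f hf).
  destruct (tl_spec p0 f) as [[q0 Hq0] Hmin].
  destruct (exists_geodesic T q0 (ac f q0)) as [seg [S0 [Sn Sg]]]. rewrite Hq0 in Sn, Sg.
  assert (Send : seg (tl Ga f) = ac f (seg 0)) by congruence.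
  assert (Sp := proj1 Sg).
  exists (periodic_line f (tl Ga f) seg). split.
  - apply line_of_no_backtrack.
    + apply periodic_line_adj; auto.
    + apply periodic_line_no_backtrack; auto. apply hf.
  - intros n. apply periodic_line_shift; auto.
Qed.

(* If an axis point [p] were off the line, with [dist p (l i)] minimal, the path
   [p .. l i .. l (i + tau) = f (l i) .. f p] would not backtrack, so [p] would be
   moved by [2 dist p (l i) + tau > tau]. *)
Lemma axis_on_translation_line (f : G) l : hyperbolic Ga f -> translation_line f l ->
  forall p, axis T Ga f p -> exists n, l n = p.
Proof.
  intros hf [I Sh] p Hp. unfold axis in Hp. assert (Htau := tl_pos p f hf).
  set (tau := tl Ga f) in *. set (tz := Z.of_nat tau).
  destruct (ex_minimal (fun k => exists n, dist p (l n) = k)) as [m [[i Hi] Hm]];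
    [exists (dist p (l 0%Z)), 0%Z; auto|].
  destruct (Nat.eq_dec m 0). { exists i. symmetry. apply dist_eq0. lia. }
  exfalso.
  destruct (exists_geodesic T p (l i)) as [Gp [G0 [Gm Gg]]]. rewrite Hi in Gm, Gg.
  set (along := fun t : nat => l (i + Z.of_nat t)%Z).
  set (back := fun j => ac f (Gp (m - j))).
  assert (Galong : geodesic T along tau) by exact (isometric_line_geodesic l i tau I).
  assert (Gback : geodesic T back m) by exact (geodesic_act_rev f Gp m Gg).
  assert (Gpm1 : dist p (Gp (m - 1)) = m - 1)
    by (rewrite <- G0, (geodesic_dist T Gp m Gg 0 (m - 1)) by lia; lia).
  assert (J1 : Gp m = along 0) by (unfold along; rewrite Z.add_0_r; auto).
  set (W1 := glue T Gp m along).
  assert (GW1 : geodesic T W1 (m + tau)).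
  { apply geodesic_glue; auto. intros _ _ E. unfold along in E.
    assert (H1 := Hm (dist p (l (i + Z.of_nat 1)%Z)) ltac:(eauto)). rewrite <- E in H1. lia. }
  assert (J2 : W1 (m + tau) = back 0).
  { unfold W1. rewrite glue_r by (auto; lia). unfold along, back.
    rewrite Nat.sub_0_r, Gm, Sh. f_equal. lia. }
  set (W := glue T W1 (m + tau) back).
  assert (GW : geodesic T W (m + tau + m)).
  { apply geodesic_glue; auto.
    intros _ _ E. unfold W1 in E. rewrite glue_r in E by (auto; lia). unfold along, back in E.
    replace (i + Z.of_nat (m + tau - 1 - m))%Z with (i - 1 + tz)%Z in E by lia.
    rewrite <- Sh in E. assert (H1 := dist_act f p (Gp (m - 1))).
    rewrite <- E, dist_act in H1.
    assert (H2 := Hm (dist p (l (i - 1)%Z)) ltac:(eauto)). lia. }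
  destruct GW as [_ HL].
  unfold W in HL. rewrite glue_l in HL by lia. rewrite glue_r in HL by (auto; lia).
  unfold W1 in HL. rewrite glue_l in HL by lia. unfold back in HL.
  replace (m - (m + tau + m - (m + tau))) with 0 in HL by lia. rewrite G0 in HL. lia.
Qed.

Lemma oriented_axis_line (f : G) (hf : hyperbolic Ga f) x y :
  axis T Ga f x -> axis T Ga f y ->
  exists (l : Z -> V) (e : G), (e = f \/ e = gi f) /\
    (forall q, dist q (ac e q) = dist q (ac f q)) /\
    l 0%Z = x /\ l (Z.of_nat (dist x y)) = y /\ (forall n, axis T Ga f (l n)) /\
    (forall n, ac e (l n) = l (n + Z.of_nat (tl Ga f))%Z) /\ isometric_line l.
Proof.
  intros Hx Hy. destruct (exists_translation_line x f hf) as [gam Hgam].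
  assert (Ax := translation_line_axis f gam Hgam).
  destruct (axis_on_translation_line f gam hf Hgam x Hx) as [a <-].
  destruct (axis_on_translation_line f gam hf Hgam _ Hy) as [b <-].
  destruct Hgam as [I Sh]. destruct (Z.le_gt_cases a b).
  - exists (fun n => gam (a + n)%Z), f. repeat split; auto.
    + rewrite Z.add_0_r; auto.
    + rewrite I by lia. f_equal. lia.
    + intros; rewrite Sh; f_equal; lia.
    + intros m n Hmn. rewrite I by lia. f_equal; lia.
  - exists (fun n => gam (a - n)%Z), (gi f). repeat split; auto.
    + apply displacement_inv.
    + rewrite Z.sub_0_r. auto.
    + rewrite dist_sym, I by lia. f_equal; lia.
    + intros n. apply (act_inj f). rewrite act_Kinv, Sh. f_equal; lia.
    + intros m n Hmn. rewrite dist_sym, I by lia. f_equal; lia.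
Qed.

End Isometries.

Lemma overlap_margin (L tau t2 : nat) (lam : R) :
  (INR L > (lam + 2) * INR tau)%R -> (0 < lam)%R -> t2 <= tau ->
  tau + t2 <= L /\ (INR (L - tau - t2) > lam * INR tau)%R.
Proof.
  intros H Hl Ht. assert (P := pos_INR tau). assert (Q := le_INR _ _ Ht).
  assert (0 <= lam * INR tau)%R by (apply Rmult_le_pos; lra).
  assert (Hle : tau + t2 <= L).
  { destruct (le_lt_dec (tau + t2) L) as [|Hlt]; auto.
    apply lt_INR in Hlt. rewrite plus_INR in Hlt. exfalso. nra. }
  split; auto. rewrite !minus_INR by lia. nra.
Qed.

Section Stability.
Variable T : Tree.
Variable Ga : TreeAction T.
Notation V := (vert T).
Notation G := (grp Ga).
Notation gi := (ginv T Ga).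
Notation gm := (gmul T Ga).
Notation ac := (act Ga).
Variable h : G.
Hypothesis hh : hyperbolic Ga h.
Variable lam : R.
Hypothesis lam_pos : (0 < lam)%R.
Notation tau := (tl Ga h).
Notation ax := (axis T Ga h).

Lemma FS_fix_line (HFS : FS Ga h lam) (l : Z -> V) (L : nat) (k : G) :
  isometric_line T l -> (forall n, ax (l n)) -> (INR L > lam * INR tau)%R ->
  (forall t, (0 <= t <= Z.of_nat L)%Z -> ac k (l t) = l t) ->
  forall p, ax p -> ac k p = p.
Proof.
  intros I Ax HL Hfix. apply HFS. exists (l 0%Z), (l (Z.of_nat L)). repeat split; auto.
  - rewrite I by lia. replace (Z.to_nat (Z.of_nat L - 0)) with L by lia. auto.
  - intros z Hz. destruct (segment_on_line T l L z I Hz) as [Ez Hle]. rewrite Ez. apply Hfix. lia.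
Qed.

(* [l1] is the axis of [h] (translated by [eh = h^{+-1}]) and [l2] the axis of [ef]; on
   [0, L - tau - t2] both [eh] and [ef] stay inside the common segment, so the
   commutator [ef^-1 eh^-1 ef eh] fixes it, hence fixes the axis of [h]. *)
Lemma FS_commutator_axis (HFS : FS Ga h lam) (l1 l2 : Z -> V) (eh ef : G) (L t2 : nat) :
  (forall q, dist q (ac eh q) = dist q (ac h q)) -> isometric_line T l1 ->
  (forall n, ax (l1 n)) ->
  (forall n, ac eh (l1 n) = l1 (n + Z.of_nat tau)%Z) ->
  (forall n, ac ef (l2 n) = l2 (n + Z.of_nat t2)%Z) ->
  (forall t, (0 <= t <= Z.of_nat L)%Z -> l1 t = l2 t) -> t2 <= tau ->
  (INR L > (lam + 2) * INR tau)%R ->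
  forall p, ax p -> ax (ac ef p).
Proof.
  intros SH I Ax Sh1 Sh2 O Ht2 HL.
  destruct (overlap_margin L tau t2 lam HL lam_pos Ht2) as [Hle HL'].
  set (k := gm (gi ef) (gm (gi eh) (gm ef eh))).
  assert (Hk : forall x, ac k x = ac (gi ef) (ac (gi eh) (ac ef (ac eh x))))
    by (intros; unfold k; rewrite !actM; auto).
  assert (Hfix : forall p, ax p -> ac k p = p).
  { apply (FS_fix_line HFS l1 (L - tau - t2)); auto.
    intros t Ht. rewrite Hk, Sh1, O, Sh2, <- O by lia.
    replace (t + Z.of_nat tau + Z.of_nat t2)%Z with (t + Z.of_nat t2 + Z.of_nat tau)%Z by lia.
    rewrite <- Sh1, act_invK, O, <- Sh2, act_invK, O by lia. auto. }
  intros p Hp. assert (Hkp := Hfix p Hp). rewrite Hk in Hkp.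
  assert (E1 : ac (gi eh) (ac ef (ac eh p)) = ac ef p)
    by (apply (act_inj T Ga (gi ef)); rewrite Hkp, act_invK; auto).
  assert (E2 : ac ef (ac eh p) = ac eh (ac ef p))
    by (apply (act_inj T Ga (gi eh)); rewrite E1, act_invK; auto).
  unfold axis. rewrite <- SH, <- E2, dist_act, SH. apply Hp.
Qed.

Lemma FS_preserves_axis (HFS : FS Ga h lam) (l1 l2 : Z -> V) (eh ef : G) (L t2 : nat) :
  (forall q, dist q (ac eh q) = dist q (ac h q)) -> isometric_line T l1 ->
  (forall n, ax (l1 n)) ->
  (forall n, ac eh (l1 n) = l1 (n + Z.of_nat tau)%Z) ->
  (forall n, ac ef (l2 n) = l2 (n + Z.of_nat t2)%Z) ->
  (forall t, (0 <= t <= Z.of_nat L)%Z -> l1 t = l2 t) -> t2 <= tau ->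
  (INR L > (lam + 2) * INR tau)%R ->
  forall p, ax p <-> ax (ac ef p).
Proof.
  intros SH I Ax Sh1 Sh2 O Ht2 HL p. split.
  - eapply FS_commutator_axis; eauto.
  - intros Hp. rewrite <- (act_invK T Ga ef p).
    apply (FS_commutator_axis HFS (fun t => l1 (Z.of_nat L - t)%Z) (fun t => l2 (Z.of_nat L - t)%Z)
             (gi eh) (gi ef) L t2); auto.
    + intros q. rewrite displacement_inv. auto.
    + intros m n Hmn. rewrite dist_sym, I by lia. f_equal. lia.
    + intros n. apply (act_inj T Ga eh). rewrite act_Kinv, Sh1. f_equal. lia.
    + intros n. apply (act_inj T Ga ef). rewrite act_Kinv, Sh2. f_equal. lia.
    + intros t Ht. apply O. lia.
Qed.

Lemma FS_AI (HFS : FS Ga h lam) : AI Ga h (lam + 2).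
Proof.
  intros g hg Hle.
  destruct (classic (inter_length_le T (axis T Ga g) ax ((lam + 2) * INR tau))) as [H|H];
    [left; auto|right].
  assert (Ex : exists x y, axis T Ga g x /\ ax x /\ axis T Ga g y /\ ax y /\
                           (INR (dist x y) > (lam + 2) * INR tau)%R).
  { apply NNPP; intro N; apply H; intros x y H1 H2 H3 H4.
    apply Rnot_lt_le; intro; apply N; exists x, y; auto. }
  destruct Ex as [x [y [Gx [Hx [Gy [Hy Hd]]]]]].
  destruct (oriented_axis_line T Ga h hh x y Hx Hy)
    as [l1 [eh [_ [SH [L10 [L1L [Ax1 [Sh1 I1]]]]]]]].
  destruct (oriented_axis_line T Ga g hg x y Gx Gy)
    as [l2 [eg [Eg [_ [L20 [L2L [_ [Sh2 I2]]]]]]]].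
  assert (O := isometric_lines_agree T l1 l2 (dist x y) I1 I2 ltac:(congruence) ltac:(congruence)).
  assert (C := FS_preserves_axis HFS l1 l2 eh eg (dist x y) (tl Ga g) SH I1 Ax1 Sh1 Sh2 O Hle Hd).
  destruct Eg as [->| ->]; [exact C|].
  intros p. rewrite (C (ac g p)), act_invK. tauto.
Qed.

(* The conjugate [f = g h g^-1] has axis [g A(h)] and the same translation length as
   [h]; once oriented alike, [eh^-1 ef] fixes a long piece of [A(h)], so [ef] and [eh]
   agree on [A(h)] and [A(h)] lies in the axis of [f]. *)
Lemma FS_translate_axis (HFS : FS Ga h lam) (g : G) x y :
  ax x -> translate_axis T Ga g h x -> ax y -> translate_axis T Ga g h y ->
  (INR (dist x y) > (lam + 2) * INR tau)%R -> forall p, ax p -> translate_axis T Ga g h p.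
Proof.
  intros Hx Tx Hy Ty Hd.
  set (f := gm g (gm h (gi g))).
  assert (Hf : forall q, ac f q = ac g (ac h (ac (gi g) q))) by (intros; unfold f; rewrite !actM; auto).
  assert (Hdf : forall q, dist q (ac f q) = dist (ac (gi g) q) (ac h (ac (gi g) q))).
  { intros q. rewrite <- (dist_act T Ga (gi g)), Hf, act_invK. auto. }
  assert (Htl : tl Ga f = tau).
  { destruct (tl_spec T Ga x f) as [[q1 Hq1] M1]. destruct (tl_spec T Ga x h) as [[q0 Hq0] M0].
    assert (H1 := M1 (ac g q0)). rewrite Hdf, act_invK in H1.
    assert (H2 := M0 (ac (gi g) q1)). rewrite <- Hdf in H2. lia. }
  assert (Fax : forall q, axis T Ga f q <-> ax (ac (gi g) q)).
  { intros q. unfold axis. rewrite Hdf, Htl. tauto. }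
  assert (hf : hyperbolic Ga f).
  { destruct hh as [h1 h2]. split.
    - intros q E. apply (h1 (ac (gi g) q)). rewrite <- E at 2. rewrite Hf, act_invK. auto.
    - intros [a [b [Hab [Ea Eb]]]]. apply h2. exists (ac (gi g) a), (ac (gi g) b).
      repeat split; [apply act_adj; auto|rewrite <- Ea, Hf, act_invK; auto|
                     rewrite <- Eb, Hf, act_invK; auto]. }
  assert (Tax : forall q, translate_axis T Ga g h q -> axis T Ga f q).
  { intros q [p [Hp ->]]. apply Fax. rewrite act_invK. auto. }
  destruct (oriented_axis_line T Ga h hh x y Hx Hy)
    as [l1 [eh [_ [SH [L10 [L1L [Ax1 [Sh1 I1]]]]]]]].
  destruct (oriented_axis_line T Ga f hf x y (Tax x Tx) (Tax y Ty))
    as [l2 [ef [_ [SF [L20 [L2L [_ [Sh2 I2]]]]]]]].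
  assert (O := isometric_lines_agree T l1 l2 (dist x y) I1 I2 ltac:(congruence) ltac:(congruence)).
  rewrite Htl in Sh2.
  destruct (overlap_margin (dist x y) tau 0 lam Hd lam_pos ltac:(lia)) as [Hle HL'].
  rewrite Nat.sub_0_r in HL'.
  assert (Hfix : forall p, ax p -> ac (gm (gi eh) ef) p = p).
  { apply (FS_fix_line HFS l1 (dist x y - tau)); auto.
    intros t Ht. rewrite actM, O, Sh2, <- O, <- Sh1, act_invK by lia. apply O; lia. }
  intros p Hp. exists (ac (gi g) p). split; [|rewrite act_Kinv; auto].
  assert (E : ac ef p = ac eh p).
  { apply (act_inj T Ga (gi eh)). rewrite act_invK, <- actM. apply Hfix; auto. }
  apply Fax. unfold axis. rewrite Htl, <- SF, E, SH. apply Hp.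
Qed.

Lemma FS_WS (HFS : FS Ga h lam) : WS Ga h (lam + 2).
Proof.
  intros g [x [y [Hx [Tx [Hy [Ty Hd]]]]]].
  assert (Back : forall q, translate_axis T Ga g h q -> ax (ac (gi g) q))
    by (intros q [p [Hp ->]]; rewrite act_invK; auto).
  assert (Forth : forall q, ax q -> translate_axis T Ga (gi g) h (ac (gi g) q))
    by (intros q Hq; exists q; auto).
  assert (S1 := FS_translate_axis HFS g x y Hx Tx Hy Ty Hd).
  assert (S2 := FS_translate_axis HFS (gi g) (ac (gi g) x) (ac (gi g) y)
                  (Back x Tx) (Forth x Hx) (Back y Ty) (Forth y Hy) ltac:(rewrite dist_act; auto)).
  intros p. split; intros Hp.
  - destruct (S2 p Hp) as [p' [Hp' E]]. rewrite E, act_Kinv. auto.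
  - destruct (S1 _ Hp) as [p' [Hp' E]]. apply act_inj in E. subst. auto.
Qed.

Lemma WS_FS (HWS : WS Ga h lam) : FS Ga h lam.
Proof.
  intros g [x [y [Hx [Hy [Hd Hfix]]]]] p Hp.
  assert (gx : ac g x = x) by (apply Hfix; unfold on_segment; rewrite dist_xx; auto).
  assert (gy : ac g y = y) by (apply Hfix; unfold on_segment; rewrite dist_xx; lia).
  assert (HE : inE T Ga h g).
  { apply HWS. exists x, y. repeat split; auto; [exists x|exists y]; auto. }
  assert (Hxy : x <> y).
  { intros ->. rewrite dist_xx in Hd. simpl in Hd.
    assert (0 <= lam * INR tau)%R by (apply Rmult_le_pos; [lra|apply pos_INR]). lra. }
  destruct (exists_translation_line T Ga x h hh) as [l Hl].
  destruct (axis_on_translation_line T Ga h l hh Hl x Hx) as [c Ec].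
  destruct (axis_on_translation_line T Ga h l hh Hl y Hy) as [e Ee].
  destruct (axis_on_translation_line T Ga h l hh Hl p Hp) as [a Ea].
  destruct (axis_on_translation_line T Ga h l hh Hl (ac g p) (proj1 (HE p) Hp)) as [b Eb].
  assert (D1 : dist (ac g p) x = dist p x) by (rewrite <- gx at 1; apply dist_act).
  assert (D2 : dist (ac g p) y = dist p y) by (rewrite <- gy at 1; apply dist_act).
  rewrite <- Eb, <- Ec, <- Ea in D1. rewrite <- Eb, <- Ee, <- Ea in D2.
  apply (f_equal Z.of_nat) in D1, D2.
  rewrite !(isometric_line_dist T l (proj1 Hl)) in D1, D2.
  assert (c <> e) by (intro; subst; auto).
  assert (a = b) by lia. subst. auto.
Qed.

End Stability.

Local Open Scope R_scope.

Theorem mainTheorem12 (T : Tree) (Ga : TreeAction T) (h : grp Ga)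
  (hh : hyperbolic Ga h) (lam : R) (hlam : 0 < lam) :
  (FS Ga h lam -> AI Ga h (lam + 2) /\ WS Ga h (lam + 2)) /\
  (WS Ga h lam -> FS Ga h lam).
Proof.
  split.
  - intros HFS. split; [apply FS_AI|apply FS_WS]; auto.
  - apply WS_FS; auto.
Qed.
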